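(* There is an absolute constant $C$ such that for every $n\ge 2$ there exists an $n\times n$ matrix $A$ over $GF(2)$ such that the map $\phi(x)=Ax$ is a mapping from ${\sf Dictator}$ to ${\sf XOR}$ on $\{0,1\}^n$, every output bit of $\phi$ depends on at most $3$ input bits, $\phi$ is $2$-Lipschitz, and $\phi^{-1}$ is $C\log n$-Lipschitz.
   Context: ${\sf Dictator}(x)=x_1$ and ${\sf XOR}(x)=\sum_{i=1}^n x_i \bmod 2$ on $\{0,1\}^n$. A mapping from $f$ to $g$ is a bijection $\psi$ of $\{0,1\}^n$ with $f(z)=g(\psi(z))$ for all $z$. A map is $L$-Lipschitz if it increases Hamming distances by a factor at most $L$. An output bit depends on at most $3$ input bits means it is a function of some fixed set of at most $3$ input coordinates. *)

From Stdlib Require Import Reals.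
From HB Require Import structures.
From mathcomp Require Import all_boot all_order all_algebra.

Set Implicit Arguments.
Unset Strict Implicit.
Unset Printing Implicit Defensive.

Definition cube (n : nat) := 'cV['F_2]_n.

(* Dictator(x) = x_1, the first coordinate (index 0 in 'I_n). *)
Definition dictator (n : nat) (x : cube n) : 'F_2 :=
  (\sum_(i < n | nat_of_ord i == O) x i ord0)%R.

Definition xor_fun (n : nat) (x : cube n) : 'F_2 := (\sum_(i < n) x i ord0)%R.

Definition hamming (n : nat) (x y : cube n) : nat := #|[set i : 'I_n | x i ord0 != y i ord0]|.

Definition lipschitz (n : nat) (L : R) (f : cube n -> cube n) : Prop :=
  forall x y : cube n, Rle (INR (hamming (f x) (f y))) (Rmult L (INR (hamming x y))).

Definition local (n k : nat) (f : cube n -> cube n) : Prop :=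
  forall i : 'I_n, exists S : {set 'I_n}, (#|S| <= k)%nat /\
    forall x y : cube n, (forall j, j \in S -> x j ord0 = y j ord0) -> f x i ord0 = f y i ord0.

Definition mapping (n : nat) (f g : cube n -> 'F_2) (psi : cube n -> cube n) : Prop :=
  bijective psi /\ forall z, f z = g (psi z).

From Stdlib Require Import Reals Lra.
From mathcomp Require Import all_boot all_algebra zify.

(* Arrange the coordinates as the nodes of a complete binary tree in heap order
   and let A = 1 - P, where P sends each node to its parent; over GF(2),
   (A x)_i = x_i + x_(2i+1) + x_(2i+2).  Each output bit reads at most 3 input
   bits and each input bit feeds at most 2 outputs, so A is 2-Lipschitz.  Every
   column of A sums to 0 except the root's, hence XOR(A x) = x_1.  P lowers the
   depth, so it is nilpotent of index at most the number of levels
   L = floor(log2 n) + 1, and A^-1 = sum_(k < L) P^k; column j of A^-1 marks the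
   ancestors of j, at most L of them, which makes A^-1 L-Lipschitz. *)

Set Implicit Arguments.
Unset Strict Implicit.
Unset Printing Implicit Defensive.

Import GRing.Theory.
Local Open Scope ring_scope.

Section Support.
Variables (T : finType) (V : nmodType).

Lemma card_supportD (f g : T -> V) :
  (#|support (f \+ g)| <= #|support f| + #|support g|)%N.
Proof.
rewrite -cardUI; apply: leq_trans (leq_addr _ _); apply: subset_leq_card.
apply/subsetP => x; rewrite !inE /=; apply: contraR => /norP[/negbNE/eqP f0 /negbNE/eqP g0].
by rewrite f0 g0 addr0.
Qed.

Lemma card_support_sum (I : Type) (r : seq I) (F : I -> T -> V) :
  (#|support (fun x => (\sum_(i <- r) F i x)%R)| <= \sum_(i <- r) #|support (F i)|)%N.
Proof.
elim: r => [|i r IHr].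
  by rewrite big_nil leqn0; apply/eqP/eq_card0 => x; rewrite !inE big_nil eqxx.
rewrite big_cons (eq_card (_ : _ =i support (F i \+ fun x => \sum_(j <- r) F j x)%R)).
  exact: leq_trans (card_supportD _ _) (leq_add (leqnn _) IHr).
by move=> x; rewrite !inE big_cons.
Qed.

End Support.

Lemma card_supportB (T : finType) (V : zmodType) (f g : T -> V) :
  (#|support (f \- g)| <= #|support f| + #|support g|)%N.
Proof.
have -> : #|support g| = #|support (fun x => - g x)|.
  by apply: eq_card => x; rewrite !inE oppr_eq0.
exact: card_supportD.
Qed.

Section SparseMatrix.
Variable R : pzSemiRingType.

Lemma card_support_mulmx m n (M : 'M[R]_(m, n)) (z : 'cV[R]_n) (L : nat) :
  (forall j, #|support (fun i => M i j)| <= L)%N ->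
  (#|support (fun i => (M *m z) i ord0)| <= L * #|support (fun j => z j ord0)|)%N.
Proof.
move=> colL.
rewrite (eq_card (_ : _ =i support (fun i => \sum_j M i j * z j ord0)%R)); last first.
  by move=> i; rewrite !inE mxE.
apply: leq_trans (card_support_sum _ (fun j i => M i j * z j ord0)%R) _.
rewrite (bigID (fun j => z j ord0 != 0)) /= [X in (_ + X)%N]big1 ?addn0; last first.
  by move=> j /negbNE/eqP zj0; apply: eq_card0 => i; rewrite !inE zj0 mulr0 eqxx.
rewrite mulnC -sum1_card big_distrl /=; apply: leq_sum => j _; rewrite mul1n.
apply: leq_trans (colL j); apply: subset_leq_card; apply/subsetP => i; rewrite !inE.
by apply: contraNN => /eqP->; rewrite mul0r.
Qed.

Definition pfun_mx m n (f : 'I_n -> option 'I_m) : 'M[R]_(m, n) :=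
  \matrix_(i, j) (f j == Some i)%:R.

Lemma mul_pfun_mx m n p (f : 'I_n -> option 'I_m) (g : 'I_p -> option 'I_n) :
  pfun_mx f *m pfun_mx g = pfun_mx (fun j => obind f (g j)).
Proof.
apply/matrixP => i j; rewrite !mxE.
case gj: (g j) => [l|] /=; last by rewrite big1 // => l _; rewrite [pfun_mx g l j]mxE gj mulr0.
rewrite (bigD1 l) //= big1 => [|l' nl'l]; first by rewrite !mxE gj eqxx mulr1 addr0.
rewrite [pfun_mx g l' j]mxE gj; case: eqP => [[el]|_]; last by rewrite mulr0.
by rewrite el eqxx in nl'l.
Qed.

Lemma pfun_mx_Some n : pfun_mx (@Some 'I_n) = 1%:M.
Proof. by apply/matrixP => i j; rewrite !mxE eq_sym. Qed.

Lemma support_pfun_mx m n (f : 'I_n -> option 'I_m) i j :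
  pfun_mx f i j != 0 -> f j == Some i.
Proof. by rewrite mxE; case: (f j == Some i); rewrite ?eqxx. Qed.

Lemma card_support_pfun_mx_col m n (f : 'I_n -> option 'I_m) j :
  (#|support (fun i => pfun_mx f i j)| <= 1)%N.
Proof.
apply/card_le1_eqP => i i'; rewrite !inE.
by move=> /support_pfun_mx/eqP fji /support_pfun_mx; rewrite fji => /eqP[->].
Qed.

Lemma card_support_pfun_mx_row m n (f : 'I_n -> option 'I_m) i :
  (#|support (fun j => pfun_mx f i j)| <= #|[pred j | f j == Some i]|)%N.
Proof.
by apply: subset_leq_card; apply/subsetP => j; rewrite !inE => /support_pfun_mx.
Qed.

Lemma sum_pfun_mx_col m n (f : 'I_n -> option 'I_m) j :
  \sum_i pfun_mx f i j = (f j != None)%:R.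
Proof.
case fj: (f j) => [l|]; last by rewrite big1 // => i _; rewrite mxE fj.
rewrite (bigD1 l) //= big1 => [|i nil]; first by rewrite mxE fj eqxx addr0.
by rewrite mxE fj; case: eqP => // -[/eqP]; rewrite eq_sym (negbTE nil).
Qed.

Lemma pfun_mx_expr n (f : 'I_n -> option 'I_n) k :
  (pfun_mx f) ^+ k = pfun_mx (fun j => iter k (obind f) (Some j)).
Proof.
elim: k => [|k IHk]; first by rewrite expr0 -idmxE -pfun_mx_Some.
by rewrite exprS IHk [_ * _]mul_pfun_mx.
Qed.

End SparseMatrix.

Lemma subr1_mul_geom_nilpotent (R : pzRingType) (x : R) (K : nat) : x ^+ K = 0 ->
  (1 - x) * \sum_(k < K) x ^+ k = 1 /\ (\sum_(k < K) x ^+ k) * (1 - x) = 1.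
Proof.
move=> xK0; have geom : (1 - x) * \sum_(k < K) x ^+ k = 1.
  by rewrite -opprB mulNr -subrX1 xK0 sub0r opprK.
have comm_geom : GRing.comm (1 - x) (\sum_(k < K) x ^+ k).
  apply: commr_sum => k _; apply: commrX.
  by rewrite /GRing.comm mulrBl mulrBr mul1r mulr1.
by rewrite -comm_geom.
Qed.

(* Node [j] carries the heap label [j.+1]: the parent of label [a] is [a %/ 2],
   and label [0] stands for "no node", so the root has no parent. *)
Definition heap_parent n (j : 'I_n) : option 'I_n :=
  if (j.+1 %/ 2)%N is k.+1 then insub k else None.

Definition heap_label n (o : option 'I_n) : nat := if o is Some i then i.+1 else 0.

Lemma heap_label_parent n (o : option 'I_n) :
  heap_label (obind (@heap_parent n) o) = (heap_label o %/ 2)%N.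
Proof.
case: o => [j|] //=; rewrite /heap_parent.
case e: (j.+1 %/ 2)%N => [|k] //; have kn : (k < n)%N by have := ltn_ord j; lia.
by rewrite insubT.
Qed.

Lemma heap_label_iter n (j : 'I_n) k :
  heap_label (iter k (obind (@heap_parent n)) (Some j)) = (j.+1 %/ 2 ^ k)%N.
Proof.
elim: k => [|k IHk]; first by rewrite expn0 divn1.
by rewrite iterS heap_label_parent IHk expnSr divnMA.
Qed.

Lemma iter_heap_parent_None n k (j : 'I_n) : (n < 2 ^ k)%N ->
  iter k (obind (@heap_parent n)) (Some j) = None.
Proof.
move=> n_lt_2k; have := heap_label_iter j k.
by rewrite divn_small ?(leq_ltn_trans (ltn_ord j)) //; case: (iter k _ _).
Qed.

Lemma heap_parent_eq_None n (j : 'I_n) : (heap_parent j == None) = (j == 0 :> nat).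
Proof.
have -> : (heap_parent j == None) = (heap_label (heap_parent j) == 0)%N.
  by case: (heap_parent j).
by have /= -> := heap_label_parent (Some j); rewrite !eqn0Ngt divn_gt0.
Qed.

Lemma card_heap_children n (i : 'I_n) :
  (#|[pred j | heap_parent j == Some i]| <= 2)%N.
Proof.
rewrite -card_bool; apply: (@leq_card_in _ _ (fun j : 'I_n => odd j)).
move=> j j'; rewrite !inE => /eqP pj /eqP pj' odd_jj'; apply: val_inj.
have := heap_label_parent (Some j); have := heap_label_parent (Some j').
rewrite /= pj pj' /=; have := modn2 j; have := modn2 j'; rewrite odd_jj'; lia.
Qed.

Definition heap_levels n := (trunc_log 2 n).+1.

Section HeapMatrix.
Variables (R : pzRingType) (n : nat).

Let P := pfun_mx R (@heap_parent n).

Definition heap_mx : 'M[R]_n := 1%:M - P.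

Definition heap_inv_mx : 'M[R]_n := \sum_(k < heap_levels n) P ^+ k.

Lemma heap_mxK : heap_mx *m heap_inv_mx = 1%:M /\ heap_inv_mx *m heap_mx = 1%:M.
Proof.
rewrite /heap_mx idmxE; apply: subr1_mul_geom_nilpotent.
rewrite pfun_mx_expr; apply/matrixP => i j.
by rewrite !mxE iter_heap_parent_None ?trunc_log_ltn.
Qed.

Lemma heap_mx_col_sum j : \sum_i heap_mx i j = (j == 0 :> nat)%:R.
Proof.
rewrite /heap_mx -pfun_mx_Some.
under eq_bigr => i _ do rewrite mxE [X in _ + X]mxE.
rewrite sumrB !sum_pfun_mx_col heap_parent_eq_None.
by case: (j == 0 :> nat); rewrite ?subrr ?subr0.
Qed.

Lemma card_support_heap_mx_col j : (#|support (fun i => heap_mx i j)| <= 2)%N.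
Proof.
rewrite (eq_card (_ : _ =i support (fun i => pfun_mx R Some i j - P i j))); last first.
  by move=> i; rewrite !inE /heap_mx -pfun_mx_Some mxE [X in _ + X]mxE.
exact: leq_trans (card_supportB _ _) (leq_add (card_support_pfun_mx_col _ _ _)
                                              (card_support_pfun_mx_col _ _ _)).
Qed.

Lemma card_support_heap_mx_row i : (#|support (fun j => heap_mx i j)| <= 3)%N.
Proof.
rewrite (eq_card (_ : _ =i support (fun j => pfun_mx R Some i j - P i j))); last first.
  by move=> j; rewrite !inE /heap_mx -pfun_mx_Some mxE [X in _ + X]mxE.
apply: leq_trans (card_supportB _ _) (leq_add (_ : _ <= 1) (_ : _ <= 2))%N.
  apply: leq_trans (card_support_pfun_mx_row _ _ _) _.
  by apply/card_le1_eqP => j j'; rewrite !inE => /eqP[->] /eqP[->].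
exact: leq_trans (card_support_pfun_mx_row _ _ _) (card_heap_children i).
Qed.

Lemma card_support_heap_inv_mx_col j :
  (#|support (fun i => heap_inv_mx i j)| <= heap_levels n)%N.
Proof.
rewrite (eq_card (_ : _ =i support (fun i => \sum_(k < heap_levels n) (P ^+ k) i j))); last first.
  by move=> i; rewrite !inE summxE.
have col1 k : (#|support (fun i => (P ^+ k) i j)| <= 1)%N.
  by rewrite /P pfun_mx_expr; exact: card_support_pfun_mx_col.
have sum_col1 : (\sum_(k < heap_levels n) #|support (fun i => (P ^+ k) i j)| <= heap_levels n)%N.
  by rewrite -[X in (_ <= X)%N]card_ord -sum1_card; apply: leq_sum => k _.
exact: leq_trans (card_support_sum _ _) sum_col1.
Qed.

End HeapMatrix.

Lemma sum_mulmx (R : pzSemiRingType) m n (M : 'M[R]_(m, n)) (z : 'cV[R]_n) :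
  \sum_i (M *m z) i ord0 = \sum_j (\sum_i M i j) * z j ord0.
Proof.
under eq_bigr => i _ do rewrite mxE.
by rewrite exchange_big; apply: eq_bigr => j _; rewrite mulr_suml.
Qed.

Lemma dictator_heap_mx n (z : cube n) : dictator z = xor_fun (heap_mx 'F_2 n *m z).
Proof.
rewrite /xor_fun sum_mulmx /dictator big_mkcond /=; apply: eq_bigr => j _.
by rewrite heap_mx_col_sum; case: (j == 0 :> nat); rewrite ?mul1r ?mul0r.
Qed.

Lemma hamming_support n (x y : cube n) : hamming x y = #|support (fun i => (x - y) i ord0)|.
Proof. by apply: eq_card => i; rewrite !inE !mxE subr_eq0. Qed.

Lemma lipschitz_mulmx n (M : 'M['F_2]_n) (L : nat) (c : R) :
  (forall j, #|support (fun i => M i j)| <= L)%N -> Rle (INR L) c ->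
  lipschitz c (fun x => M *m x).
Proof.
move=> colL Lc x y; rewrite !hamming_support -mulmxBr.
move: (card_support_mulmx (x - y) colL) => /leP/le_INR; rewrite mult_INR => ham_le.
apply: Rle_trans ham_le _; apply: Rmult_le_compat_r => //; exact: pos_INR.
Qed.

Lemma local_mulmx n (M : 'M['F_2]_n) k :
  (forall i, #|support (fun j => M i j)| <= k)%N -> local k (fun x => M *m x).
Proof.
move=> rowk i; exists [set j in support (fun j => M i j)].
rewrite cardsE; split=> [|x y xy]; first exact: rowk.
rewrite !mxE; apply: eq_bigr => j _.
have [-> | Mij_neq0] := eqVneq (M i j) 0; first by rewrite !mul0r.
by rewrite xy // inE.
Qed.

Local Open Scope R_scope.

Lemma heap_levels_le_ln n : (2 <= n)%N -> INR (heap_levels n) <= 4 * ln (INR n).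
Proof.
move=> n2; rewrite /heap_levels S_INR; set t := trunc_log 2 n.
have t1 : 1 <= INR t by apply: (le_INR 1); apply/leP/trunc_log_max; rewrite ?expn1.
have pow_le : 2 ^ t <= INR n.
  have -> : 2 ^ t = INR (2 ^ t)%N by elim: (t) => [|k IHk] //; rewrite expnS mult_INR -IHk.
  by apply/le_INR/leP/trunc_logP; lia.
have ln_pow_le : INR t * ln 2 <= ln (INR n).
  rewrite -ln_pow; last lra.
  have [pow_lt_n | ->] := Rle_lt_or_eq_dec _ _ pow_le; last lra.
  by apply/Rlt_le/ln_increasing => //; apply: pow_lt; lra.
have := ln_lt_2; nra.
Qed.

Theorem theorem2 :
  exists C : R, forall n : nat, (2 <= n)%nat ->
    exists A : 'M['F_2]_n,
      let phi := fun x : cube n => (A *m x)%R in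
      mapping (@dictator n) (@xor_fun n) phi /\
      local 3 phi /\
      lipschitz (INR 2) phi /\
      (exists phiinv : cube n -> cube n,
          cancel phi phiinv /\ cancel phiinv phi /\
          lipschitz (Rmult C (ln (INR n))) phiinv).
Proof.
exists 4 => n n2; exists (heap_mx 'F_2 n) => phi.
have [AB BA] := heap_mxK 'F_2 n.
pose phiinv (y : cube n) : cube n := heap_inv_mx 'F_2 n *m y.
have phiK : cancel phi phiinv by move=> x; rewrite /phiinv mulmxA BA mul1mx.
have phiinvK : cancel phiinv phi by move=> y; rewrite /phi mulmxA AB mul1mx.
split; first by split; [exact: Bijective phiK phiinvK | exact: dictator_heap_mx].
split; first exact/local_mulmx/card_support_heap_mx_row.
split; first exact: lipschitz_mulmx (@card_support_heap_mx_col _ n) (Rle_refl _).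
exists phiinv; split=> //; split=> //.
exact: lipschitz_mulmx (@card_support_heap_inv_mx_col _ n) (heap_levels_le_ln n2).
Qed.
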